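(* Let $(G,\cdot)$ be a WIPL with identity $e$, let $(H,\circ)$ be a WIPL with identity $e'$, and let $(A,B,C)$ be an isotopism from $(G,\cdot)$ to $(H,\circ)$. Put $a'=eA$ and $b'=eB$. Assume that either $(x\circ y)^{\rho'}=x^{\rho'}\circ y^{\lambda'}$ for all $x,y\in H$, or $(x\circ y)^{\lambda'}=x^{\lambda'}\circ y^{\rho'}$ for all $x,y\in H$. Then $C$ is an isomorphism from $(G,\cdot)$ onto $(H,\circ)$ if and only if $(L_{b'}',R_{a'}',I)\in AUT(H,\circ)$. Moreover, in that case $(G,\cdot)$ and $(H,\circ)$ are (isomorphic) cross inverse property loops, $R_{a'}'L_{b'}'=I$ and $b'\circ a'=e'$.
   Context: Maps are written on the right of their arguments ($xU$) and composed left to right: $UV$ means first apply $U$, then $V$; $I$ is the identity map. For a loop $(L,\cdot)$ with identity $e$, $x^\rho$ and $x^\lambda$ denote the right and left inverses of $x$ ($x x^\rho=e=x^\lambda x$). For the loop $(H,\circ)$ with identity $e'$, $y^{\rho'}$, $y^{\lambda'}$ are the right and left inverses of $y$ in $H$, and $L_y':z\mapsto y\circ z$, $R_y':z\mapsto z\circ y$. $L$ is a weak inverse property loop (WIPL) if $xy\cdot z=e$ implies $x\cdot yz=e$ for all $x,y,z\in L$; it is a cross inverse property loop (CIPL) if $xy\cdot x^\rho=y$ for all $x,y\in L$. A triple $(U,V,W)$ of bijections $G\to H$ between loops $(G,\cdot)$ and $(H,\circ)$ is an isotopism if $xU\circ yV=(x\cdot y)W$ for all $x,y\in G$; an autotopism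 is an isotopism of a loop to itself, and $AUT(H,\circ)$ denotes the group of autotopisms under componentwise composition. *)

From Stdlib Require Import ClassicalEpsilon.
Set Implicit Arguments.

Record loop := Loop {
  car :> Type;
  lop : car -> car -> car;
  lid : car;
  lop_e_l : forall x, lop lid x = x;
  lop_e_r : forall x, lop x lid = x;
  lop_lsolve : forall a b, exists! x, lop a x = b;
  lop_rsolve : forall a b, exists! y, lop y a = b
}.

Lemma ex_of_exu (T : Type) (P : T -> Prop) : (exists! x, P x) -> exists x, P x.
Proof. intros [x [Hx _]]; exists x; exact Hx. Qed.

(* right inverse x^rho : x * x^rho = e *)
Definition rinv {L : loop} (x : L) : L :=
  proj1_sig (constructive_indefinite_description _
    (@ex_of_exu _ _ (lop_lsolve L x (lid L)))).
(* left inverse x^lambda : x^lambda * x = e *)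
Definition linv {L : loop} (x : L) : L :=
  proj1_sig (constructive_indefinite_description _
    (@ex_of_exu _ _ (lop_rsolve L x (lid L)))).

Definition Lt {L : loop} (y : L) : L -> L := fun z => lop L y z.
Definition Rt {L : loop} (y : L) : L -> L := fun z => lop L z y.

Definition bij {A B : Type} (f : A -> B) : Prop :=
  exists g : B -> A, (forall x, g (f x) = x) /\ (forall y, f (g y) = y).

Definition WIPL (L : loop) : Prop :=
  forall x y z : L, lop L (lop L x y) z = lid L -> lop L x (lop L y z) = lid L.

Definition CIPL (L : loop) : Prop :=
  forall x y : L, lop L (lop L x y) (rinv x) = y.

Definition isotopism {G H : loop} (U V W : G -> H) : Prop :=
  bij U /\ bij V /\ bij W /\
  forall x y : G, lop H (U x) (V y) = W (lop G x y).

Definition autotopism {H : loop} (U V W : H -> H) : Prop := isotopism U V W.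

Definition isomorphism {G H : loop} (C : G -> H) : Prop :=
  bij C /\ forall x y : G, C (lop G x y) = lop H (C x) (C y).

(* Write a := eA and b := eB.  Every isotopism (A,B,C) satisfies
   xC = xA∘b and yC = a∘yB, so C is an isomorphism exactly when the
   "middle identity"  (P∘b)∘(a∘Q) = P∘Q  holds in H; and (L_b,R_a,I) is an
   autotopism exactly when the "outer identity"  (b∘X)∘(Y∘a) = X∘Y  holds.
   Each identity forces b∘a = e (take all variables equal to e).

   The hypothesis on inverses makes left and right inverses coincide, so
   that J : x ↦ x^ρ is an involutive automorphism of H; together with the
   weak inverse property this gives  y∘(x∘y^ρ) = x  and the cross inverse
   property  (y∘x)∘y^ρ = x.  Once b∘a = e, so a = b^ρ and b = a^ρ, these
   cancellation laws and J transform the middle identity into the outer one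
   and back.  Finally an isomorphism carries the cross inverse property of
   H back to G, and b∘(x∘a) = x is the first cancellation law again. *)

From Stdlib Require Import ClassicalEpsilon.
Set Implicit Arguments.
Unset Strict Implicit.

Local Notation "x ⋅ y" := (lop _ x y) (at level 40, left associativity).

Section LoopBasics.
Variable L : loop.

Lemma lop_cancel_l (a x y : L) : a ⋅ x = a ⋅ y -> x = y.
Proof.
  intro Hxy. destruct (lop_lsolve L a (a ⋅ x)) as [z [_ Huniq]].
  rewrite <- (Huniq x eq_refl). apply Huniq. now symmetry.
Qed.

Lemma lop_cancel_r (a x y : L) : x ⋅ a = y ⋅ a -> x = y.
Proof.
  intro Hxy. destruct (lop_rsolve L a (x ⋅ a)) as [z [_ Huniq]].
  rewrite <- (Huniq x eq_refl). apply Huniq. now symmetry.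
Qed.

Lemma rinv_r (x : L) : x ⋅ rinv x = lid L.
Proof. unfold rinv. now destruct constructive_indefinite_description. Qed.

Lemma linv_l (x : L) : linv x ⋅ x = lid L.
Proof. unfold linv. now destruct constructive_indefinite_description. Qed.

Lemma rinv_unique (x y : L) : x ⋅ y = lid L -> rinv x = y.
Proof. intro Hxy. apply (@lop_cancel_l x). now rewrite rinv_r. Qed.

Lemma linv_unique (x y : L) : y ⋅ x = lid L -> linv x = y.
Proof. intro Hyx. apply (@lop_cancel_r x). now rewrite linv_l. Qed.

Lemma Lt_bij (b : L) : bij (Lt b).
Proof.
  exists (fun y => proj1_sig (constructive_indefinite_description _
    (@ex_of_exu _ _ (lop_lsolve L b y)))).
  split.
  - intro x. apply (@lop_cancel_l b).
    now destruct constructive_indefinite_description.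
  - intro y. unfold Lt. now destruct constructive_indefinite_description.
Qed.

Lemma Rt_bij (a : L) : bij (Rt a).
Proof.
  exists (fun y => proj1_sig (constructive_indefinite_description _
    (@ex_of_exu _ _ (lop_rsolve L a y)))).
  split.
  - intro x. apply (@lop_cancel_r a).
    now destruct constructive_indefinite_description.
  - intro y. unfold Rt. now destruct constructive_indefinite_description.
Qed.

End LoopBasics.

(* The two identities that characterise, respectively, C being an
   isomorphism and (L_b, R_a, I) being an autotopism. *)
Definition middle_identity {L : loop} (a b : L) : Prop :=
  forall P Q : L, (P ⋅ b) ⋅ (a ⋅ Q) = P ⋅ Q.

Definition outer_identity {L : loop} (b a : L) : Prop :=
  forall X Y : L, (b ⋅ X) ⋅ (Y ⋅ a) = X ⋅ Y.

Lemma middle_identity_inverse (L : loop) (a b : L) :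
  middle_identity a b -> b ⋅ a = lid L.
Proof.
  intro Hmid. specialize (Hmid (lid L) (lid L)).
  now rewrite lop_e_l, lop_e_r, lop_e_l in Hmid.
Qed.

Lemma outer_identity_inverse (L : loop) (a b : L) :
  outer_identity b a -> b ⋅ a = lid L.
Proof.
  intro Hout. specialize (Hout (lid L) (lid L)).
  now rewrite lop_e_r, lop_e_l, lop_e_l in Hout.
Qed.

Lemma autotopism_translations_iff (L : loop) (a b : L) :
  autotopism (Lt b) (Rt a) (fun x : L => x) <-> outer_identity b a.
Proof.
  split.
  - intros [_ [_ [_ Hiso]]] X Y. apply Hiso.
  - intro Hout. split; [apply Lt_bij | split; [apply Rt_bij | split]].
    + exists (fun x => x). now split.
    + intros X Y. apply Hout.
Qed.

Section Isotopism.
Variables (G H : loop) (A B C : G -> H).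
Hypothesis iso : isotopism A B C.

Lemma isotopism_right (x : G) : C x = A x ⋅ B (lid G).
Proof. destruct iso as [_ [_ [_ HC]]]. now rewrite HC, lop_e_r. Qed.

Lemma isotopism_left (y : G) : C y = A (lid G) ⋅ B y.
Proof. destruct iso as [_ [_ [_ HC]]]. now rewrite HC, lop_e_l. Qed.

Lemma isomorphism_iff_middle :
  isomorphism C <-> middle_identity (A (lid G)) (B (lid G)).
Proof.
  destruct iso as [[gA [_ HgA]] [[gB [_ HgB]] [HbijC HC]]].
  split.
  - intros [_ Hhom] P Q.
    rewrite <- (HgA P), <- (HgB Q), <- isotopism_right, <- isotopism_left.
    now rewrite <- Hhom, HC.
  - intro Hmid. split; [exact HbijC |].
    intros x y.
    now rewrite <- HC, (isotopism_right x), (isotopism_left y), Hmid.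
Qed.

End Isotopism.

Section IsomorphismTransfer.
Variables (G H : loop) (C : G -> H).
Hypothesis Ciso : isomorphism C.

Lemma isomorphism_lid : C (lid G) = lid H.
Proof.
  destruct Ciso as [_ Hhom]. apply (@lop_cancel_r H (C (lid G))).
  now rewrite <- Hhom, !lop_e_l.
Qed.

Lemma isomorphism_rinv (x : G) : C (rinv x) = rinv (C x).
Proof.
  destruct Ciso as [_ Hhom]. symmetry. apply rinv_unique.
  now rewrite <- Hhom, rinv_r, isomorphism_lid.
Qed.

Lemma isomorphism_reflects_CIPL : CIPL H -> CIPL G.
Proof.
  intros HCH x y. destruct Ciso as [[gC [HgC _]] Hhom].
  assert (Cinj : forall u v, C u = C v -> u = v).
  { intros u v Huv. now rewrite <- (HgC u), <- (HgC v), Huv. }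
  apply Cinj. rewrite !Hhom, isomorphism_rinv. apply HCH.
Qed.

End IsomorphismTransfer.

Section InverseLaw.
Variable H : loop.
Hypothesis inv_law :
  (forall x y : H, rinv (x ⋅ y) = rinv x ⋅ linv y) \/
  (forall x y : H, linv (x ⋅ y) = linv x ⋅ rinv y).

Lemma linv_eq_rinv (x : H) : linv x = rinv x.
Proof.
  destruct inv_law as [Hlaw | Hlaw].
  - apply linv_unique. pose proof (Hlaw x (rinv x)) as Hx.
    rewrite rinv_r, (linv_unique (rinv_r x)) in Hx.
    now rewrite <- Hx, (rinv_unique (lop_e_l H (lid H))).
  - pose proof (Hlaw (linv x) x) as Hx.
    rewrite linv_l, (linv_unique (lop_e_l H (lid H))) in Hx.
    rewrite <- (rinv_unique (eq_sym Hx)).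
    symmetry. apply rinv_unique, linv_l.
Qed.

Lemma rinv_involutive (x : H) : rinv (rinv x) = x.
Proof. rewrite <- linv_eq_rinv. apply linv_unique, rinv_r. Qed.

Lemma rinv_mul (x y : H) : rinv (x ⋅ y) = rinv x ⋅ rinv y.
Proof.
  destruct inv_law as [Hlaw | Hlaw].
  - now rewrite Hlaw, linv_eq_rinv.
  - now rewrite <- !linv_eq_rinv, Hlaw, !linv_eq_rinv.
Qed.

Lemma inverse_pair (a b : H) : b ⋅ a = lid H -> rinv a = b /\ rinv b = a.
Proof.
  intro Hba. assert (Hb : rinv b = a) by now apply rinv_unique.
  split; [now rewrite <- Hb, rinv_involutive | exact Hb].
Qed.

Hypothesis WH : WIPL H.

Lemma conj_cancel (y x : H) : y ⋅ (x ⋅ rinv y) = x.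
Proof.
  assert (Hrinv : forall z, y ⋅ (rinv z ⋅ rinv y) = rinv z).
  { intro z. apply (@lop_cancel_l H z). rewrite rinv_r.
    apply WH. rewrite <- rinv_mul. apply rinv_r. }
  specialize (Hrinv (rinv x)). now rewrite !rinv_involutive in Hrinv.
Qed.

Lemma cross_inverse : CIPL H.
Proof. intros y x. apply (@lop_cancel_l H y). apply conj_cancel. Qed.

(* Substituting P = a∘U, Q = V∘b in the middle identity and applying the
   inversion automorphism yields the outer identity, and conversely. *)
Lemma middle_outer_equiv (a b : H) :
  b ⋅ a = lid H -> (middle_identity a b <-> outer_identity b a).
Proof.
  intro Hba. destruct (inverse_pair Hba) as [Ha Hb].
  split.
  - intros Hmid X Y.
    assert (Hsub : forall U V, (a ⋅ U) ⋅ (V ⋅ b) = U ⋅ V).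
    { intros U V. rewrite <- Hmid, <- Ha.
      now rewrite (cross_inverse a U), conj_cancel. }
    pose proof (f_equal rinv (Hsub (rinv X) (rinv Y))) as HJ.
    now rewrite !rinv_mul, Ha, Hb, !rinv_involutive in HJ.
  - intros Hout P Q.
    assert (Hsub : forall U V, (U ⋅ a) ⋅ (b ⋅ V) = U ⋅ V).
    { intros U V. rewrite <- Hout, <- Hb.
      now rewrite (cross_inverse b V), conj_cancel. }
    pose proof (f_equal rinv (Hsub (rinv P) (rinv Q))) as HJ.
    now rewrite !rinv_mul, Ha, Hb, !rinv_involutive in HJ.
Qed.

End InverseLaw.

Theorem mainTheorem5 (G H : loop) (A B C : G -> H) :
  WIPL G -> WIPL H ->
  isotopism A B C ->
  ((forall x y : H, rinv (lop H x y) = lop H (rinv x) (linv y)) \/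
   (forall x y : H, linv (lop H x y) = lop H (linv x) (rinv y))) ->
  let a' := A (lid G) in
  let b' := B (lid G) in
  (isomorphism C <-> autotopism (Lt b') (Rt a') (fun x : H => x)) /\
  (isomorphism C ->
     CIPL G /\ CIPL H /\
     (* R'_{a'} L'_{b'} = I, maps composed left to right *)
     (forall x : H, Lt b' (Rt a' x) = x) /\
     lop H b' a' = lid H).
Proof.
  intros _ WH iso inv_law a' b'.
  assert (Hmid : isomorphism C <-> middle_identity a' b')
    by exact (isomorphism_iff_middle iso).
  pose proof (autotopism_translations_iff a' b') as Haut.
  assert (Hequiv : isomorphism C <-> autotopism (Lt b') (Rt a') (fun x => x)).
  { rewrite Hmid, Haut. split; intro Hid.
    - apply (middle_outer_equiv inv_law WH (middle_identity_inverse Hid)), Hid.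
    - apply (middle_outer_equiv inv_law WH (outer_identity_inverse Hid)), Hid. }
  split; [exact Hequiv |].
  intro Ciso.
  pose proof (middle_identity_inverse (proj1 Hmid Ciso)) as Hba.
  pose proof (cross_inverse inv_law WH) as CH.
  split; [exact (isomorphism_reflects_CIPL Ciso CH) |].
  split; [exact CH | split; [| exact Hba]].
  intro x. unfold Lt, Rt.
  rewrite <- (proj2 (inverse_pair inv_law Hba)). apply (conj_cancel inv_law WH).
Qed.
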